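(* Let $N\ge 1$, let $s_1,\dots,s_N>0$ and $u_1,\dots,u_N>0$ with the nodes indexed so that $u_1\le u_2\le\dots\le u_N$, let $H_1,\dots,H_N\ge 0$ be integers and $\mathcal{E}>0$. For slot length $\sigma>0$ and transmit probability $\tau\in(0,1)$ define $p_s=\tau(1-\tau)^{N-1}$, $\bar t_i=(1-\tau)^N\sigma$, $\bar t_s=\sum_{k=1}^N p_s(s_k+\sigma)$, $$\bar t_c=\sum_{k=2}^N \tau(1-\tau)^{N-k}\sum_{l=1}^{k-1}\binom{k-1}{l}\tau^l(1-\tau)^{k-1-l}(u_k+\sigma),$$ and the CSMA throughput per node and bit-cost of node $k$ $$\mathsf{S}=\frac{p_s}{\bar t_s+\bar t_c+\bar t_i},\qquad \mathsf{B}_k=\Bigl(H_k+\frac{\tau}{p_s}\Bigr)u_k\mathcal{E}.$$ If $\tau=c\sqrt{\sigma}$ for a fixed constant $c>0$, then $$\lim_{\sigma\to 0}\mathsf{S}=\frac{1}{\sum_{k=1}^N s_k}\quad\text{and}\quad \lim_{\sigma\to 0}\mathsf{B}_k=(H_k+1)u_k\mathcal{E}\ \text{ for every } k.$$ That is, CSMA based CoopMAC and Direct Link asymptotically attain the throughput and bit-cost of the corresponding Round Robin schemes.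
   Context: Interpretation (for CSMA based Direct Link and CoopMAC with $N$ saturated nodes sending 1-bit packets to an access point, all at transmit power $\mathcal{E}$): $s_k$ is the travel time of a packet of node $k$ ($1/R_k$ for direct transmission at rate $R_k$, or $1/R_{kh_k}+1/R_{h_k}$ if $k$ transmits via a helper $h_k$), $u_k$ is the duration of node $k$'s own transmission ($1/R_k$ or $1/R_{kh_k}$), and $H_k$ is the number of nodes that node $k$ helps (all $H_k=0$ in Direct Link). The Round Robin values are throughput $1/\sum_k s_k$ per node and bit-cost $(H_k+1)u_k\mathcal{E}$; $\sigma$ is a slot length normalized by packet size, so $\sigma\to0$ corresponds to packet lengths tending to infinity. *)

From Stdlib Require Import Reals.
From Coquelicot Require Import Coquelicot.
Open Scope R_scope.

Fixpoint sum_range (m : nat) (len : nat) (f : nat -> R) : R :=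
  match len with
  | O => 0
  | S l => f m + sum_range (S m) l f
  end.
Definition sumk (a b : nat) (f : nat -> R) : R := sum_range a (S b - a) f.

Definition binomR (n k : nat) : R := Binomial.C n k.

(* Quantities of the CSMA model; nodes indexed 1..N. *)
Definition p_s (N : nat) (tau : R) : R := tau * (1 - tau) ^ (N - 1).
Definition t_i (N : nat) (tau sigma : R) : R := (1 - tau) ^ N * sigma.
Definition t_s (N : nat) (s : nat -> R) (tau sigma : R) : R :=
  sumk 1 N (fun k => p_s N tau * (s k + sigma)).
Definition t_c (N : nat) (u : nat -> R) (tau sigma : R) : R :=
  sumk 2 N (fun k => tau * (1 - tau) ^ (N - k) *
     sumk 1 (k - 1) (fun l => binomR (k - 1) l * tau ^ l * (1 - tau) ^ (k - 1 - l)
                                * (u k + sigma))).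
Definition throughput (N : nat) (s u : nat -> R) (tau sigma : R) : R :=
  p_s N tau / (t_s N s tau sigma + t_c N u tau sigma + t_i N tau sigma).
Definition bitcost (N : nat) (H : nat -> nat) (u : nat -> R) (E tau : R) (k : nat) : R :=
  (INR (H k) + tau / p_s N tau) * u k * E.

From Stdlib Require Import Reals Lra Lia.
From Coquelicot Require Import Coquelicot.
Open Scope R_scope.

(* Divide numerator and denominator of the throughput by the transmit
   probability tau.  Then p_s/tau = (1-tau)^(N-1) -> 1 and
   t_s/tau = (1-tau)^(N-1) (s_1 + ... + s_N + N sigma) -> s_1 + ... + s_N,
   while every collision term of t_c/tau still carries a factor tau^l with
   l >= 1, so t_c/tau -> 0.  Finally t_i/tau = (1-tau)^N sigma/tau -> 0
   because tau = c sqrt(sigma) vanishes more slowly than sigma.  The bit-cost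
   only involves tau/p_s = (1-tau)^(1-N) -> 1. *)

Section RealFilterlim.
Context {T : Type} {F : (T -> Prop) -> Prop} {FF : Filter F}.

Lemma filterlim_Rplus (f g : T -> R) (a b : R) :
  filterlim f F (locally a) -> filterlim g F (locally b) ->
  filterlim (fun x => f x + g x) F (locally (a + b)).
Proof.
  intros Hf Hg.
  exact (filterlim_comp_2 f g Rplus Hf Hg (@filterlim_plus _ R_NormedModule a b)).
Qed.

Lemma filterlim_Rmult (f g : T -> R) (a b : R) :
  filterlim f F (locally a) -> filterlim g F (locally b) ->
  filterlim (fun x => f x * g x) F (locally (a * b)).
Proof.
  intros Hf Hg.
  exact (filterlim_comp_2 f g Rmult Hf Hg (@filterlim_mult R_AbsRing a b)).
Qed.

Lemma filterlim_Rminus (f g : T -> R) (a b : R) :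
  filterlim f F (locally a) -> filterlim g F (locally b) ->
  filterlim (fun x => f x - g x) F (locally (a - b)).
Proof.
  intros Hf Hg.
  apply filterlim_Rplus; [exact Hf|].
  exact (filterlim_comp _ _ _ g Ropp _ _ _ Hg (@filterlim_opp _ R_NormedModule b)).
Qed.

Lemma filterlim_Rinv (f : T -> R) (a : R) :
  a <> 0 -> filterlim f F (locally a) ->
  filterlim (fun x => / f x) F (locally (/ a)).
Proof.
  intros Ha Hf. exact (filterlim_comp _ _ _ f Rinv _ _ _ Hf (continuous_Rinv a Ha)).
Qed.

Lemma filterlim_Rpow (f : T -> R) (a : R) (n : nat) :
  filterlim f F (locally a) -> filterlim (fun x => f x ^ n) F (locally (a ^ n)).
Proof.
  intros Hf. induction n as [|n IH]; simpl.
  - apply filterlim_const.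
  - apply filterlim_Rmult; assumption.
Qed.

Lemma filterlim_sum_range (f : nat -> T -> R) (l : nat -> R) (m n : nat) :
  (forall k, filterlim (f k) F (locally (l k))) ->
  filterlim (fun x => sum_range m n (fun k => f k x)) F (locally (sum_range m n l)).
Proof.
  intros Hf. revert m. induction n as [|n IH]; intros m; simpl.
  - apply filterlim_const.
  - apply filterlim_Rplus; auto.
Qed.

End RealFilterlim.

Lemma sum_range_ext (m n : nat) (f g : nat -> R) :
  (forall k, f k = g k) -> sum_range m n f = sum_range m n g.
Proof.
  intros Hfg. revert m. induction n as [|n IH]; intros m; simpl; congruence.
Qed.

Lemma sum_range_mult_l (m n : nat) (a : R) (f : nat -> R) :
  sum_range m n (fun k => a * f k) = a * sum_range m n f.
Proof.
  revert m. induction n as [|n IH]; intros m; simpl; [ring|].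
  rewrite IH. ring.
Qed.

Lemma sum_range_eq0 (m n : nat) (f : nat -> R) :
  (forall k, (m <= k)%nat -> f k = 0) -> sum_range m n f = 0.
Proof.
  revert m. induction n as [|n IH]; intros m Hf; simpl; [reflexivity|].
  rewrite (Hf m (le_n m)), IH; [ring|].
  intros k Hk. apply Hf. lia.
Qed.

Lemma sum_range_gt0 (m n : nat) (f : nat -> R) :
  (0 < n)%nat -> (forall k, (m <= k < m + n)%nat -> 0 < f k) ->
  0 < sum_range m n f.
Proof.
  revert m. induction n as [|n IH]; intros m Hn Hf; [lia|].
  assert (Hm : 0 < f m) by (apply Hf; lia).
  change (0 < f m + sum_range (S m) n f).
  destruct n as [|n]; [simpl; lra|].
  assert (Htail : 0 < sum_range (S m) (S n) f)
    by (apply IH; [lia | intros; apply Hf; lia]).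
  lra.
Qed.

(* Inner sum of t_c: node k collides with l >= 1 of the nodes 1..k-1, and the
   collision lasts u_k because the u_j are nondecreasing. *)
Definition collision_weight (u : nat -> R) (tau sigma : R) (k : nat) : R :=
  sumk 1 (k - 1) (fun l => binomR (k - 1) l * tau ^ l * (1 - tau) ^ (k - 1 - l)
                            * (u k + sigma)).

Lemma t_s_factor (N : nat) (s : nat -> R) (tau sigma : R) :
  t_s N s tau sigma = tau * ((1 - tau) ^ (N - 1) * sumk 1 N (fun k => s k + sigma)).
Proof.
  unfold t_s, sumk, p_s. rewrite <- !sum_range_mult_l.
  apply sum_range_ext. intros k. ring.
Qed.

Lemma t_c_factor (N : nat) (u : nat -> R) (tau sigma : R) :
  t_c N u tau sigma =
  tau * sumk 2 N (fun k => (1 - tau) ^ (N - k) * collision_weight u tau sigma k).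
Proof.
  unfold t_c, sumk. rewrite <- sum_range_mult_l.
  apply sum_range_ext. intros k. unfold collision_weight, sumk. ring.
Qed.

Lemma t_i_factor (N : nat) (tau sigma : R) :
  tau <> 0 -> t_i N tau sigma = tau * ((1 - tau) ^ N * (sigma / tau)).
Proof. intros Htau. unfold t_i. field. exact Htau. Qed.

Lemma throughput_factor (N : nat) (s u : nat -> R) (tau sigma : R) :
  tau <> 0 ->
  throughput N s u tau sigma =
  (1 - tau) ^ (N - 1) /
  ((1 - tau) ^ (N - 1) * sumk 1 N (fun k => s k + sigma)
   + sumk 2 N (fun k => (1 - tau) ^ (N - k) * collision_weight u tau sigma k)
   + (1 - tau) ^ N * (sigma / tau)).
Proof.
  intros Htau.
  unfold throughput, p_s. rewrite t_s_factor, t_c_factor, t_i_factor by exact Htau.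
  rewrite <- !Rmult_plus_distr_l. apply Rdiv_mult_l_l, Htau.
Qed.

(* Valid even when (1 - tau)^(N-1) = 0, since then both sides use [/ 0 = 0]. *)
Lemma bitcost_factor (N : nat) (H : nat -> nat) (u : nat -> R) (E tau : R) (k : nat) :
  tau <> 0 ->
  bitcost N H u E tau k = (INR (H k) + / (1 - tau) ^ (N - 1)) * u k * E.
Proof.
  intros Htau. unfold bitcost, p_s, Rdiv. rewrite Rinv_mult.
  replace (tau * (/ tau * / (1 - tau) ^ (N - 1)))
    with ((tau * / tau) * / (1 - tau) ^ (N - 1)) by ring.
  rewrite Rinv_r by exact Htau. ring.
Qed.

Section VanishingTransmitProbability.
Context {T : Type} {F : (T -> Prop) -> Prop} {FF : Filter F}.
Variables tau sigma : T -> R.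
Hypothesis tau_lim : filterlim tau F (locally 0).
Hypothesis sigma_lim : filterlim sigma F (locally 0).
Hypothesis sigma_div_tau_lim : filterlim (fun x => sigma x / tau x) F (locally 0).
Hypothesis tau_neq0 : F (fun x => tau x <> 0).

Lemma filterlim_one_minus_tau_pow (n : nat) :
  filterlim (fun x => (1 - tau x) ^ n) F (locally 1).
Proof.
  assert (Hbase : filterlim (fun x => 1 - tau x) F (locally (1 - 0)))
    by (apply filterlim_Rminus; [apply filterlim_const | exact tau_lim]).
  rewrite Rminus_0_r in Hbase.
  pose proof (filterlim_Rpow _ _ n Hbase) as Hpow. rewrite pow1 in Hpow. exact Hpow.
Qed.

Lemma filterlim_collision_weight (u : nat -> R) (k : nat) :
  filterlim (fun x => collision_weight u (tau x) (sigma x) k) F (locally 0).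
Proof.
  set (l0 := fun l => binomR (k - 1) l * 0 ^ l * 1 * (u k + 0)).
  replace 0 with (sum_range 1 (S (k - 1) - 1) l0) at 1.
  - apply filterlim_sum_range. intros l. unfold l0.
    apply filterlim_Rmult; [apply filterlim_Rmult; [apply filterlim_Rmult|] |].
    + apply filterlim_const.
    + apply filterlim_Rpow, tau_lim.
    + apply filterlim_one_minus_tau_pow.
    + apply filterlim_Rplus; [apply filterlim_const | exact sigma_lim].
  - apply sum_range_eq0. intros l Hl. unfold l0. rewrite pow_i by lia. ring.
Qed.

Lemma filterlim_throughput (N : nat) (s u : nat -> R) :
  0 < sumk 1 N s ->
  filterlim (fun x => throughput N s u (tau x) (sigma x)) F (locally (1 / sumk 1 N s)).
Proof.
  intros Hsum.
  eapply filterlim_ext_loc.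
  { apply filter_imp with (2 := tau_neq0). intros x Hx.
    symmetry. apply throughput_factor, Hx. }
  replace (1 / sumk 1 N s) with (1 / (1 * sumk 1 N s + 0 + 1 * 0)) by (f_equal; ring).
  apply filterlim_Rmult; [apply filterlim_one_minus_tau_pow|].
  apply filterlim_Rinv; [lra|].
  repeat apply filterlim_Rplus.
  - apply filterlim_Rmult; [apply filterlim_one_minus_tau_pow|].
    unfold sumk. rewrite (sum_range_ext _ _ s (fun k => s k + 0)) by (intros; ring).
    apply filterlim_sum_range. intros k.
    apply filterlim_Rplus; [apply filterlim_const | exact sigma_lim].
  - unfold sumk.
    rewrite <- (sum_range_eq0 2 (S N - 2) (fun _ => 1 * 0)) by (intros; ring).
    apply filterlim_sum_range. intros k.
    apply filterlim_Rmult; [apply filterlim_one_minus_tau_pow | apply filterlim_collision_weight].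
  - apply filterlim_Rmult; [apply filterlim_one_minus_tau_pow | exact sigma_div_tau_lim].
Qed.

Lemma filterlim_bitcost (N : nat) (H : nat -> nat) (u : nat -> R) (E : R) (k : nat) :
  filterlim (fun x => bitcost N H u E (tau x) k) F (locally ((INR (H k) + 1) * u k * E)).
Proof.
  eapply filterlim_ext_loc.
  { apply filter_imp with (2 := tau_neq0). intros x Hx.
    symmetry. apply bitcost_factor, Hx. }
  replace (INR (H k) + 1) with (INR (H k) + / 1) by (rewrite Rinv_1; reflexivity).
  apply filterlim_Rmult; [apply filterlim_Rmult|]; try apply filterlim_const.
  apply filterlim_Rplus; [apply filterlim_const|].
  apply filterlim_Rinv; [lra | apply filterlim_one_minus_tau_pow].
Qed.

End VanishingTransmitProbability.

Lemma at_right_le_locally (a : R) : filter_le (at_right a) (locally a).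
Proof. intros P HP. apply filter_imp with (2 := HP). auto. Qed.

Lemma at_right_gt (a : R) : at_right a (fun x => a < x).
Proof. unfold at_right, within. apply filter_forall. auto. Qed.

Lemma filterlim_sqrt_0_right : filterlim sqrt (at_right 0) (locally 0).
Proof.
  eapply filterlim_filter_le_1; [apply at_right_le_locally|].
  rewrite <- sqrt_0 at 2. apply continuous_sqrt.
Qed.

Lemma filterlim_scal_sqrt_0_right (c : R) :
  filterlim (fun x => c * sqrt x) (at_right 0) (locally 0).
Proof.
  rewrite <- (Rmult_0_r c) at 2.
  apply filterlim_Rmult; [apply filterlim_const | apply filterlim_sqrt_0_right].
Qed.

Lemma scal_sqrt_neq0_right (c : R) :
  0 < c -> at_right 0 (fun x => c * sqrt x <> 0).
Proof.
  intros Hc. apply filter_imp with (2 := at_right_gt 0). intros x Hx.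
  apply Rgt_not_eq, Rmult_lt_0_compat; [exact Hc | apply sqrt_lt_R0, Hx].
Qed.

Lemma filterlim_div_scal_sqrt_0_right (c : R) :
  0 < c -> filterlim (fun x => x / (c * sqrt x)) (at_right 0) (locally 0).
Proof.
  intros Hc. apply (filterlim_ext_loc (fun x => sqrt x * / c)).
  - apply filter_imp with (2 := at_right_gt 0). intros x Hx.
    rewrite <- (sqrt_sqrt x) at 2 by lra.
    field. split; [apply Rgt_not_eq, sqrt_lt_R0, Hx | lra].
  - replace (locally 0) with (@locally R_UniformSpace (0 * / c))
      by (rewrite Rmult_0_l; reflexivity).
    apply filterlim_Rmult; [apply filterlim_sqrt_0_right | apply filterlim_const].
Qed.

Theorem proposition2 (N : nat) (s u : nat -> R) (H : nat -> nat) (E c : R) :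
  (1 <= N)%nat ->
  (forall k, (1 <= k <= N)%nat -> 0 < s k) ->
  (forall k, (1 <= k <= N)%nat -> 0 < u k) ->
  (forall k l, (1 <= k)%nat -> (k <= l)%nat -> (l <= N)%nat -> u k <= u l) ->
  0 < E -> 0 < c ->
  filterlim (fun sigma => throughput N s u (c * sqrt sigma) sigma)
    (at_right 0) (locally (1 / sumk 1 N s)) /\
  (forall k, (1 <= k <= N)%nat ->
    filterlim (fun sigma => bitcost N H u E (c * sqrt sigma) k)
      (at_right 0) (locally ((INR (H k) + 1) * u k * E))).
Proof.
  intros HN Hs _ _ _ Hc.
  pose proof (filterlim_scal_sqrt_0_right c) as tau_lim.
  pose proof (scal_sqrt_neq0_right c Hc) as tau_neq0.
  split.
  - apply (filterlim_throughput (fun x => c * sqrt x) (fun x => x)); try assumption.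
    + eapply filterlim_filter_le_1; [apply at_right_le_locally | apply filterlim_id].
    + apply filterlim_div_scal_sqrt_0_right, Hc.
    + unfold sumk. apply sum_range_gt0; [lia | intros k Hk; apply Hs; lia].
  - intros k _. apply (filterlim_bitcost (fun x => c * sqrt x)); assumption.
Qed.
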